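(* Let $M,N,K$ be symmetric homogeneous bi-variate means having symmetric asymptotic expansions with coefficients $(a^M_n)$, $(a^N_n)$, $(a^K_n)$. Suppose $K$ and $N$ are stable and $M$ is $(K,N)$-stabilized, i.e. $M(s,t)=K\big(N(s,M(s,t)),N(M(s,t),t)\big)$ for all $s,t>0$. Then $a^M_0=1$ and for $m\ge1$ $$a^M_m=\sum_{n=1}^ma^N_n\sum_{k=0}^{2m-2n}P[k,2n,\mathbf g^M]P[2m-2n-k,-2n+1,\mathbf h^M]+2\sum_{n=1}^ma^K_n\sum_{k=0}^{m-n}P[k,2n,\mathbf d]P[m-n-k,-2n+1,\mathbf s],$$ with $\mathbf d,\mathbf s$ defined by $d_m=-\frac12\sum_{n=0}^ma^N_n\sum_{k=0}^{2m+1-2n}P[k,2n,\mathbf g^M]P[2m+1-2n-k,-2n+1,\mathbf h^M]$ and $s_m=\frac12\sum_{n=0}^ma^N_n\sum_{k=0}^{2m-2n}P[k,2n,\mathbf g^M]P[2m-2n-k,-2n+1,\mathbf h^M]$. In particular $a^M_1=\frac12(a^K_1+a^N_1)$.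
   Context: A bi-variate mean is $M:(0,\infty)^2\to(0,\infty)$ with $\min(s,t)\le M(s,t)\le\max(s,t)$; symmetric and homogeneous (degree 1) as usual. $M$ is stable if $M(s,t)=M\big(M(s,M(s,t)),M(M(s,t),t)\big)$. For two nontrivial stable means $K,N$, a mean $M$ is $(K,N)$-stabilized if $M(s,t)=K\big(N(s,M(s,t)),N(M(s,t),t)\big)$ for all $s,t>0$. A mean has a symmetric asymptotic expansion with coefficients $(a_n)$ if for every fixed real $t$ and $N\ge0$, $M(x-t,x+t)=\sum_{n=0}^Na_nt^{2n}x^{-2n+1}+o(x^{-2N+1})$ as $x\to\infty$. For a sequence $\mathbf b$ with $b_0\ne0$, $r\in\mathbb R$: $P[0,r,\mathbf b]=b_0^r$, $P[n,r,\mathbf b]=\frac1{nb_0}\sum_{k=1}^n(k(1+r)-n)b_kP[n-k,r,\mathbf b]$ ($n\ge1$), i.e. the coefficient of $z^n$ in $(\sum_jb_jz^j)^r$. $\mathbf g^M=(1,a^M_1,0,a^M_2,0,\ldots)$ ($g_0=1$, $g_{2k-1}=a^M_k$, $g_{2k}=0$), $\mathbf h^M=(2,-1,a^M_1,0,a^M_2,0,\ldots)$ ($h_0=2$, $h_1=-1$, $h_{2k}=a^M_k$, $h_{2k+1}=0$), $k\ge1$. *)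

From Stdlib Require Import Reals Lra Lia.
From Coquelicot Require Import Coquelicot.
Open Scope R_scope.

Fixpoint sumR (n : nat) (f : nat -> R) : R :=
  match n with
  | O => 0
  | S n' => sumR n' f + f n'
  end.

(* sum_{i=lo}^{hi} f i  (empty if hi < lo) *)
Definition sum_ft (lo hi : nat) (f : nat -> R) : R :=
  sumR (S hi - lo) (fun i => f (lo + i)%nat).

(* A bi-variate mean on (0,oo)^2 (functions are total on R x R; only
   positive arguments matter). *)
Definition is_mean (M : R -> R -> R) : Prop :=
  forall s t, 0 < s -> 0 < t -> Rmin s t <= M s t <= Rmax s t.

Definition is_symmetric (M : R -> R -> R) : Prop :=
  forall s t, 0 < s -> 0 < t -> M s t = M t s.

Definition is_homogeneous (M : R -> R -> R) : Prop :=
  forall l s t, 0 < l -> 0 < s -> 0 < t -> M (l * s) (l * t) = l * M s t.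

Definition is_stable (M : R -> R -> R) : Prop :=
  forall s t, 0 < s -> 0 < t ->
    M s t = M (M s (M s t)) (M (M s t) t).

Definition is_stabilized (K N M : R -> R -> R) : Prop :=
  forall s t, 0 < s -> 0 < t ->
    M s t = K (N s (M s t)) (N (M s t) t).

(* Symmetric asymptotic expansion with coefficients a:
   for all real t and all Nn, as x -> +oo,
   M(x-t,x+t) = sum_{n=0}^{Nn} a_n t^{2n} x^{-2n+1} + o(x^{-2Nn+1}),
   the little-o expressed as: (difference) / x^{-2Nn+1} -> 0. *)
Definition has_sym_asymp_exp (M : R -> R -> R) (a : nat -> R) : Prop :=
  forall (t : R) (Nn : nat),
    is_lim
      (fun x => (M (x - t) (x + t)
                 - sum_ft 0 Nn (fun n => a n * t ^ (2 * n) * x / x ^ (2 * n)))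
                * x ^ (2 * Nn) / x)
      p_infty 0.

(* P[n,r,b]: coefficient of z^n in (sum_j b_j z^j)^r, via the recursion
   P[0,r,b] = b_0^r,
   P[n,r,b] = 1/(n b_0) sum_{k=1}^n (k(1+r)-n) b_k P[n-k,r,b].
   Ptab n j = P[j,r,b] for j <= n. b_0^r is the real power Rpower
   (only used with b_0 > 0 here). *)
Fixpoint Ptab (r : R) (b : nat -> R) (n : nat) : nat -> R :=
  match n with
  | O => fun _ => Rpower (b O) r
  | S n' =>
      let T := Ptab r b n' in
      fun j => if (j <=? n')%nat then T j
               else / (INR (S n') * b O) *
                    sum_ft 1 (S n')
                      (fun k => (INR k * (1 + r) - INR (S n')) * b k
                                * T (S n' - k)%nat)
  end.

Definition P (n : nat) (r : R) (b : nat -> R) : R := Ptab r b n n.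

(* g^M = (1, a_1, 0, a_2, 0, ...) *)
Definition gseq (a : nat -> R) (j : nat) : R :=
  match j with
  | O => 1
  | _ => if Nat.odd j then a (Nat.div2 (S j)) else 0
  end.

(* h^M = (2, -1, a_1, 0, a_2, 0, ...) *)
Definition hseq (a : nat -> R) (j : nat) : R :=
  match j with
  | O => 2
  | S O => -1
  | _ => if Nat.even j then a (Nat.div2 j) else 0
  end.

Definition conv (n L : nat) (g h : nat -> R) : R :=
  sum_ft 0 L (fun k => P k (2 * INR n) g * P (L - k)%nat (1 - 2 * INR n) h).

Definition dseq (aM aN : nat -> R) (m : nat) : R :=
  - / 2 * sum_ft 0 m (fun n => aN n * conv n (2 * m + 1 - 2 * n) (gseq aM) (hseq aM)).

Definition sseq (aM aN : nat -> R) (m : nat) : R :=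
  / 2 * sum_ft 0 m (fun n => aN n * conv n (2 * m - 2 * n) (gseq aM) (hseq aM)).

From Stdlib Require Import Reals Lra Lia FunctionalExtensionality.
From Coquelicot Require Import Coquelicot.
Open Scope R_scope.

(* For a homogeneous mean X let phi X u = X (1-u) (1+u).  By homogeneity the
   symmetric asymptotic expansion of X at infinity is the same thing as a
   Taylor-type expansion phi X u = sum_n a^X_n u^(2n) + o(u^(2Nn)) at u = 0
   (asymp_expansion), and X p q = (p+q)/2 * phi X ((q-p)/(p+q))
   (homogeneous_phi).  With m = phi M u, stabilization reads
   phi M u = K (N1 u) (N2 u), where N1 u = N (1-u) m and N2 u = N m (1+u) = N1 (-u).
   Both N1 and K (N1, N2) have the shape B u * phi X (u * A u / B u) for series
   A, B with known expansions, and such a function expands as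
   sum_n a^X_n u^(2n) A^(2n) B^(1-2n) (expansion_compose); the coefficients of a
   real power b^r of a series are the P[k,r,b], characterised by the ODE
   r b' F = b F' (power_ode).  For N1 one takes A = g^M, B = h^M; then the
   even part S = (N1+N2)/2 and the odd part D = (N2-N1)/2 of N2 satisfy
   S = sum_m s_m u^(2m) and D/u = sum_m d_m u^(2m) (to every order), and
   for M one takes A = D/u, B = S.  Uniqueness of expansions yields
   aM_m = sum_n aK_n [d^(2n) s^(1-2n)]_(m-n), whose n = 0 term is
   s_m = (aM_m + sum_(n>=1) ...)/2; solving for aM_m gives the theorem. *)

Lemma sumR_ext n f g : (forall i, (i < n)%nat -> f i = g i) -> sumR n f = sumR n g.
Proof. induction n; simpl; intros H; auto. rewrite IHn by (intros; apply H; lia). rewrite H by lia; auto. Qed.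

Lemma sumR_plus n f g : sumR n (fun i => f i + g i) = sumR n f + sumR n g.
Proof. induction n; simpl; [lra|]. rewrite IHn; lra. Qed.

Lemma sumR_minus n f g : sumR n (fun i => f i - g i) = sumR n f - sumR n g.
Proof. induction n; simpl; [lra|]. rewrite IHn; lra. Qed.

Lemma sumR_scal n c f : sumR n (fun i => c * f i) = c * sumR n f.
Proof. induction n; simpl; [lra|]. rewrite IHn; lra. Qed.

Lemma sumR_S n f : sumR (S n) f = sumR n f + f n.
Proof. reflexivity. Qed.

Lemma sumR_first n f : sumR (S n) f = f O + sumR n (fun i => f (S i)).
Proof. induction n; simpl; [lra|]. simpl in IHn; rewrite IHn; lra. Qed.

Lemma sumR_zero n f : (forall i, (i < n)%nat -> f i = 0) -> sumR n f = 0.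
Proof. intros H. rewrite (sumR_ext n f (fun _ => 0)) by auto. clear H; induction n; simpl; lra. Qed.

Lemma sumR_split n m f : sumR (n + m) f = sumR n f + sumR m (fun i => f (n + i)%nat).
Proof. induction m; simpl. rewrite Nat.add_0_r; lra. rewrite Nat.add_succ_r; simpl; rewrite IHm; lra. Qed.

Lemma sumR_rev n f : sumR n f = sumR n (fun i => f (n - 1 - i)%nat).
Proof.
  induction n; auto.
  rewrite (sumR_first n (fun i => f (S n - 1 - i)%nat)).
  change (sumR (S n) f) with (sumR n f + f n). rewrite IHn.
  replace (S n - 1 - 0)%nat with n by lia.
  rewrite Rplus_comm. f_equal. apply sumR_ext; intros; f_equal; lia.
Qed.

(* Coefficient sequences c : nat -> R are read as formal power series
   sum_k c_k X^k.  cauchy is their product, psum c x K the partial sum up to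
   degree K evaluated at x, shift drops the constant term, dcoef is the
   formal derivative, cst a the constant a, var_seq the variable X, mulX the
   multiplication by X, delay j the multiplication by X^j. *)

Definition cauchy (a b : nat -> R) (k : nat) : R := sumR (S k) (fun j => a j * b (k - j)%nat).
Definition psum (c : nat -> R) (x : R) (K : nat) : R := sumR (S K) (fun k => c k * x ^ k).
Definition shift (c : nat -> R) (k : nat) : R := c (S k).
Definition dcoef (c : nat -> R) (k : nat) : R := INR (S k) * c (S k).
Definition cst (a : R) (k : nat) : R := match k with O => a | _ => 0 end.
Definition var_seq (k : nat) : R := match k with 1%nat => 1 | _ => 0 end.
Definition mulX (c : nat -> R) (k : nat) : R := match k with O => 0 | S k' => c k' end.
Definition delay (j : nat) (c : nat -> R) (k : nat) : R := if (j <=? k)%nat then c (k - j)%nat else 0.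

Lemma cauchy_0 a b : cauchy a b O = a O * b O.
Proof. unfold cauchy. simpl. ring. Qed.

Lemma cauchy_shift a b k : cauchy a b (S k) = cauchy a (shift b) k + a (S k) * b O.
Proof.
  unfold cauchy. rewrite sumR_S. f_equal. apply sumR_ext; intros i Hi.
  unfold shift. f_equal. f_equal. lia. rewrite Nat.sub_diag; auto.
Qed.

Lemma cauchy_comm a b : cauchy a b = cauchy b a.
Proof.
  apply functional_extensionality. intros k. unfold cauchy. rewrite sumR_rev.
  apply sumR_ext. intros i Hi. replace (S k - 1 - i)%nat with (k - i)%nat by lia.
  replace (k - (k - i))%nat with i by lia. ring.
Qed.

Lemma cauchy_plus_r a b c : cauchy a (fun k => b k + c k) = (fun k => cauchy a b k + cauchy a c k).
Proof. apply functional_extensionality; intros k. unfold cauchy. rewrite <- sumR_plus. apply sumR_ext; intros; ring. Qed.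

Lemma cauchy_scal_r a b r : cauchy a (fun k => r * b k) = (fun k => r * cauchy a b k).
Proof. apply functional_extensionality; intros k. unfold cauchy. rewrite <- sumR_scal. apply sumR_ext; intros; ring. Qed.

Lemma cauchy_scal_l a b r : cauchy (fun k => r * a k) b = (fun k => r * cauchy a b k).
Proof. rewrite cauchy_comm, cauchy_scal_r, cauchy_comm. auto. Qed.

Lemma cauchy_cst0 a : cauchy a (cst 0) = cst 0.
Proof. apply functional_extensionality. intros k. unfold cauchy. rewrite sumR_zero. destruct k; auto.
  intros i _. destruct (k - i)%nat; simpl; ring. Qed.

Lemma cauchy_cst1_l a : cauchy (cst 1) a = a.
Proof. apply functional_extensionality. intros k. unfold cauchy. rewrite sumR_first. rewrite sumR_zero.
  simpl. rewrite Nat.sub_0_r. ring. intros; simpl; ring. Qed.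

Lemma cauchy_var_seq c k : cauchy var_seq c k = mulX c k.
Proof.
  unfold cauchy. destruct k.
  - simpl. ring.
  - rewrite sumR_first, sumR_first. simpl (var_seq 0). simpl (var_seq 1).
    rewrite sumR_zero. simpl. rewrite Nat.sub_0_r. ring.
    intros i _. simpl. ring.
Qed.

Lemma dcoef_cauchy a b : dcoef (cauchy a b) = (fun k => cauchy (dcoef a) b k + cauchy a (dcoef b) k).
Proof.
  apply functional_extensionality; intros k. unfold dcoef, cauchy.
  transitivity (sumR (S (S k)) (fun j => INR j * (a j * b (S k - j)%nat))
              + sumR (S (S k)) (fun j => INR (S k - j) * (a j * b (S k - j)%nat))).
  { rewrite <- sumR_plus, <- sumR_scal. apply sumR_ext; intros i Hi.
    rewrite <- Rmult_plus_distr_r. f_equal. rewrite <- plus_INR. f_equal; lia. }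
  f_equal.
  - rewrite sumR_first. simpl (INR 0). rewrite Rmult_0_l, Rplus_0_l.
    apply sumR_ext; intros i Hi. simpl (S k - S i)%nat. lra.
  - rewrite sumR_S. rewrite Nat.sub_diag. simpl (INR 0). rewrite Rmult_0_l, Rplus_0_r.
    apply sumR_ext; intros i Hi. replace (S k - i)%nat with (S (k - i)) by lia. lra.
Qed.

Lemma dcoef_cst1 : dcoef (cst 1) = cst 0.
Proof. apply functional_extensionality. intros [|k]; unfold dcoef; simpl; ring. Qed.

Lemma psum_ext c d x K : (forall k, (k <= K)%nat -> c k = d k) -> psum c x K = psum d x K.
Proof. intros H. unfold psum. apply sumR_ext. intros i Hi. rewrite H by lia; auto. Qed.

Lemma psum_S c x K : psum c x (S K) = c O + x * psum (shift c) x K.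
Proof.
  unfold psum. rewrite sumR_first, <- sumR_scal. f_equal; [simpl; lra|].
  apply sumR_ext; intros; unfold shift; simpl; lra.
Qed.

Lemma psum_cst a x K : psum (cst a) x K = a.
Proof. induction K. unfold psum; simpl; ring. unfold psum in *. rewrite sumR_S, IHK. simpl; ring. Qed.

Lemma psum_at0 c K : psum c 0 K = c O.
Proof. induction K. unfold psum; simpl; ring. unfold psum in *. rewrite sumR_S, IHK. simpl. ring. Qed.

Lemma sum_delay_trunc (A : nat -> R) (X : nat -> nat -> R) (j : nat -> nat) L k m :
  (m <= L)%nat -> (forall n, (n <= m)%nat -> (j n <= k)%nat) -> (forall n, (m < n)%nat -> (k < j n)%nat) ->
  sumR (S L) (fun n => A n * delay (j n) (X n) k) = sumR (S m) (fun n => A n * X n (k - j n)%nat).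
Proof.
  intros HmL H1 H2. replace (S L) with (S m + (L - m))%nat by lia. rewrite sumR_split.
  rewrite (sumR_zero (L - m)). rewrite Rplus_0_r. apply sumR_ext. intros n Hn. unfold delay.
  rewrite (proj2 (Nat.leb_le _ _)) by (apply H1; lia). auto.
  intros i _. unfold delay. rewrite (proj2 (Nat.leb_gt _ _)) by (apply H2; lia). ring.
Qed.

Definition lim0 (f : R -> R) (l : R) : Prop := is_lim f 0 l.

Lemma lim0_plus f g a b : lim0 f a -> lim0 g b -> lim0 (fun u => f u + g u) (a + b).
Proof. apply is_lim_plus'. Qed.
Lemma lim0_minus f g a b : lim0 f a -> lim0 g b -> lim0 (fun u => f u - g u) (a - b).
Proof. apply is_lim_minus'. Qed.
Lemma lim0_mult f g a b : lim0 f a -> lim0 g b -> lim0 (fun u => f u * g u) (a * b).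
Proof. intros H1 H2. apply (is_lim_mult f g 0 a b H1 H2). simpl; auto. Qed.
Lemma lim0_const a : lim0 (fun _ => a) a.
Proof. apply is_lim_const. Qed.
Lemma lim0_id : lim0 (fun u => u) 0.
Proof. apply is_lim_id. Qed.
Lemma lim0_inv f a : lim0 f a -> a <> 0 -> lim0 (fun u => / f u) (/ a).
Proof. intros H Ha. apply (is_lim_inv f 0 a H). intro E; injection E; auto. Qed.
Lemma lim0_ext f g a : Rbar_locally' 0 (fun u => f u = g u) -> lim0 f a -> lim0 g a.
Proof. apply is_lim_ext_loc. Qed.
Lemma lim0_ext' f g a : (forall u, f u = g u) -> lim0 f a -> lim0 g a.
Proof. intros H; apply lim0_ext. apply filter_forall; auto. Qed.
Lemma lim0_pow f a n : lim0 f a -> lim0 (fun u => f u ^ n) (a ^ n).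
Proof. intros H; induction n; simpl. apply lim0_const. apply lim0_mult; auto. Qed.
Lemma lim0_unique f a b : lim0 f a -> lim0 f b -> a = b.
Proof. intros H1 H2. apply is_lim_unique in H1. apply is_lim_unique in H2.
  rewrite H1 in H2. injection H2; auto. Qed.

Lemma lim0_neq f a : lim0 f a -> a <> 0 -> Rbar_locally' 0 (fun u => f u <> 0).
Proof.
  intros H Ha. apply is_lim_spec in H. simpl in H.
  assert (He : 0 < Rabs a) by (apply Rabs_pos_lt; auto).
  specialize (H (mkposreal _ He)). eapply filter_imp; [|exact H].
  simpl. intros u Hu E. rewrite E in Hu. rewrite Rminus_0_l, Rabs_Ropp in Hu. lra.
Qed.

Lemma near_punctured (Q : R -> Prop) : (forall u, -1 < u < 1 -> u <> 0 -> Q u) -> Rbar_locally' 0 Q.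
Proof.
  intros H. exists (mkposreal 1 Rlt_0_1). intros u Hu Hu0. change (Rabs (u + - 0) < 1) in Hu.
  rewrite Ropp_0, Rplus_0_r in Hu. apply Rabs_def2 in Hu. apply H; auto; lra.
Qed.

(* Expansions.  A gauge e tends to 0 and is nonzero near 0;
   expands e f c K means f u = sum_(k<=K) c_k e(u)^k + o(e(u)^K) as u -> 0.
   The gauges used are u (lin_gauge) and u^2 (sq_gauge). *)

Definition gauge (e : R -> R) : Prop := lim0 e 0 /\ Rbar_locally' 0 (fun u => e u <> 0).

Definition expands (e f : R -> R) (c : nat -> R) (K : nat) : Prop :=
  lim0 (fun u => (f u - psum c (e u) K) / (e u) ^ K) 0.

Definition lin_gauge (u : R) : R := u.
Definition sq_gauge (u : R) : R := u ^ 2.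

Lemma gauge_lin : gauge lin_gauge.
Proof. split. apply lim0_id. unfold lin_gauge. simpl. exists (mkposreal 1 Rlt_0_1). intros y _ H; exact H. Qed.

Lemma gauge_sq : gauge sq_gauge.
Proof. split. replace 0 with (0 ^ 2) by (simpl; ring). apply lim0_pow. apply lim0_id.
  exists (mkposreal 1 Rlt_0_1). intros y _ H; unfold sq_gauge. apply pow_nonzero; auto. Qed.

Lemma expands_ext e f g c d K : Rbar_locally' 0 (fun u => f u = g u) ->
  (forall k, (k <= K)%nat -> c k = d k) -> expands e f c K -> expands e g d K.
Proof.
  intros Hf Hc H. unfold expands. eapply lim0_ext; [|exact H].
  eapply filter_imp; [|exact Hf]. intros u Hu. simpl. rewrite Hu. f_equal. f_equal.
  apply psum_ext. auto.
Qed.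

Lemma psum_lim e c K : lim0 e 0 -> lim0 (fun u => psum c (e u) K) (c O).
Proof.
  intros He. induction K.
  - unfold psum. simpl. eapply lim0_ext'; [|apply lim0_const]. intros; simpl; ring.
  - replace (c O) with (c O + c (S K) * 0 ^ (S K)) by (simpl; ring).
    apply (lim0_ext' (fun u => psum c (e u) K + c (S K) * e u ^ S K)).
    + intros u. unfold psum. rewrite (sumR_S (S K)). auto.
    + apply lim0_plus. apply IHK. apply lim0_mult. apply lim0_const. apply lim0_pow; auto.
Qed.

Lemma expands_0_iff e f c : expands e f c 0 <-> lim0 f (c O).
Proof.
  unfold expands, psum. simpl. split; intros H.
  - replace (c O) with (0 + c O) by ring.
    apply (lim0_ext' (fun u => (f u - (0 + c O * 1)) / 1 + c O)). intros; field.
    apply lim0_plus; auto. apply lim0_const.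
  - replace 0 with (c O - c O) by ring.
    apply (lim0_ext' (fun u => f u - c O)). intros; field.
    apply lim0_minus; auto. apply lim0_const.
Qed.

Lemma expands_S_iff e f c K : gauge e ->
  (expands e f c (S K) <-> lim0 f (c O) /\ expands e (fun u => (f u - c O) / e u) (shift c) K).
Proof.
  intros [He0 He].
  assert (Hpt : Rbar_locally' 0 (fun u =>
     (f u - psum c (e u) (S K)) / e u ^ S K =
     ((f u - c O) / e u - psum (shift c) (e u) K) / e u ^ K)).
  { eapply filter_imp; [|exact He]. intros u Hu. rewrite psum_S. change (e u ^ S K) with (e u * e u ^ K).
    field. split; auto. apply pow_nonzero; auto. }
  split.
  - intros H. split.
    + replace (c O) with (0 * 0 ^ S K + c O) by (simpl; ring). eapply lim0_ext.
      2: { apply lim0_plus. apply lim0_mult. exact H. apply lim0_pow. exact He0.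
           apply (psum_lim e c (S K)). exact He0. }
      eapply filter_imp; [|exact He]. intros u Hu. cbv beta. change (e u ^ S K) with (e u * e u ^ K).
      field. split; [apply pow_nonzero|]; auto.
    + unfold expands. eapply lim0_ext; [exact Hpt | exact H].
  - intros [_ H]. unfold expands. eapply lim0_ext; [|exact H].
    eapply filter_imp; [|exact Hpt]. intros u Hu; auto.
Qed.

Lemma expands_lim e f c K : gauge e -> expands e f c K -> lim0 f (c O).
Proof.
  intros Hg H. destruct K.
  - apply expands_0_iff in H; exact H.
  - apply (expands_S_iff e f c K Hg) in H; tauto.
Qed.

Lemma expands_down e f c K : gauge e -> expands e f c (S K) -> expands e f c K.
Proof.
  intros Hg. revert f c. induction K; intros f c H.
  - apply expands_0_iff. apply (expands_lim e f c 1); auto.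
  - apply (expands_S_iff _ _ _ _ Hg) in H. destruct H as [H1 H2].
    apply (expands_S_iff _ _ _ _ Hg); auto.
Qed.

Lemma expands_down_le e f c K K' : gauge e -> (K' <= K)%nat -> expands e f c K -> expands e f c K'.
Proof. intros Hg Hle. induction Hle; auto. intros H; apply IHHle. apply expands_down; auto. Qed.

Lemma expands_unique e K : gauge e -> forall f c d, expands e f c K -> expands e f d K ->
  forall k, (k <= K)%nat -> c k = d k.
Proof.
  intros Hg. induction K; intros f c d H1 H2 k Hk.
  - apply expands_0_iff in H1; apply expands_0_iff in H2. replace k with O by lia. eapply lim0_unique; eauto.
  - apply (expands_S_iff _ _ _ _ Hg) in H1; apply (expands_S_iff _ _ _ _ Hg) in H2.
    destruct H1 as [H1a H1b]; destruct H2 as [H2a H2b].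
    pose proof (lim0_unique _ _ _ H1a H2a) as E0.
    destruct k. auto. rewrite E0 in H1b.
    apply (IHK _ _ _ H1b H2b k). lia.
Qed.

Lemma expands_add_rem e f r c K : expands e f c K -> lim0 (fun u => r u / e u ^ K) 0 ->
  expands e (fun u => f u + r u) c K.
Proof.
  unfold expands. intros H1 H2. replace 0 with (0 + 0) by ring.
  eapply lim0_ext'; [|apply lim0_plus; [exact H1|exact H2]]. intros u. cbv beta. unfold Rdiv. ring.
Qed.

Lemma expands_plus e f g c d K : expands e f c K -> expands e g d K ->
  expands e (fun u => f u + g u) (fun k => c k + d k) K.
Proof.
  unfold expands. intros H1 H2. replace 0 with (0 + 0) by ring.
  eapply lim0_ext'; [|apply lim0_plus; [exact H1|exact H2]].
  intros u. cbv beta. unfold psum.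
  rewrite (sumR_ext (S K) (fun k => (c k + d k) * e u ^ k) (fun i => c i * e u ^ i + d i * e u ^ i)) by (intros; ring).
  rewrite sumR_plus. unfold Rdiv. ring.
Qed.

Lemma expands_scal e f c K a : expands e f c K -> expands e (fun u => a * f u) (fun k => a * c k) K.
Proof.
  unfold expands. intros H. replace 0 with (a * 0) by ring.
  eapply lim0_ext'; [|apply lim0_mult; [apply lim0_const|exact H]].
  intros u. cbv beta. unfold psum.
  rewrite (sumR_ext (S K) (fun k => (a * c k) * e u ^ k) (fun i => a * (c i * e u ^ i))) by (intros; ring).
  rewrite sumR_scal. unfold Rdiv. ring.
Qed.

Lemma expands_const e a K : expands e (fun _ => a) (cst a) K.
Proof.
  unfold expands. eapply lim0_ext'; [|apply lim0_const]. intros u. cbv beta. rewrite psum_cst.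
  unfold Rdiv. ring.
Qed.

Lemma expands_self e K : gauge e -> expands e e var_seq K.
Proof.
  intros Hg. destruct K.
  - apply expands_0_iff. apply Hg.
  - unfold expands. eapply lim0_ext'; [|apply lim0_const]. intros u. cbv beta.
    rewrite psum_S. rewrite (psum_ext _ (cst 1)). rewrite psum_cst. simpl. unfold Rdiv. ring.
    intros [|k] _; reflexivity.
Qed.

Lemma expands_sumR e K n (F : nat -> R -> R) (C : nat -> nat -> R) :
  (forall i, (i < n)%nat -> expands e (F i) (C i) K) ->
  expands e (fun u => sumR n (fun i => F i u)) (fun k => sumR n (fun i => C i k)) K.
Proof.
  induction n; intros H.
  - simpl. eapply expands_ext; [apply filter_forall; reflexivity| |apply (expands_const e 0 K)].
    intros [|k] _; reflexivity.
  - simpl. apply expands_plus. apply IHn; intros; apply H; lia. apply H; lia.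
Qed.

Lemma expands_mult e K : gauge e -> forall f g c d, expands e f c K -> expands e g d K ->
  expands e (fun u => f u * g u) (cauchy c d) K.
Proof.
  intros Hg. induction K; intros f g c d H1 H2.
  - apply expands_0_iff. apply expands_0_iff in H1. apply expands_0_iff in H2.
    rewrite cauchy_0. apply lim0_mult; auto.
  - pose proof H1 as Hf. apply expands_down in Hf; auto.
    apply (expands_S_iff _ _ _ _ Hg) in H1; apply (expands_S_iff _ _ _ _ Hg) in H2.
    destruct H1 as [H1a H1b]; destruct H2 as [H2a H2b].
    apply (expands_S_iff _ _ _ _ Hg). rewrite cauchy_0. split; [apply lim0_mult; auto|].
    (* (fg - c0 d0)/e = f (g - d0)/e + d0 (f - c0)/e *)
    pose proof (expands_plus _ _ _ _ _ _ (IHK _ _ _ _ Hf H2b) (expands_scal _ _ _ _ (d O) H1b)) as P.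
    eapply expands_ext; [| | exact P].
    + apply filter_forall. intros u. cbv beta. unfold Rdiv. ring.
    + intros k _. change (shift (cauchy c d) k) with (cauchy c d (S k)).
      rewrite cauchy_shift. unfold shift at 2. ring.
Qed.

Lemma expands_pow e K f c n : gauge e -> expands e f c K ->
  expands e (fun u => f u ^ n) (Nat.iter n (cauchy c) (cst 1)) K.
Proof.
  intros Hg H. induction n; simpl.
  - eapply expands_ext; [| |apply expands_const]. apply filter_forall; auto. auto.
  - apply expands_mult; auto.
Qed.

(* i is the reciprocal series of c: i * c = 1, solved degree by degree. *)
Definition is_reciprocal (c i : nat -> R) : Prop :=
  i O = / c O /\ forall k, i (S k) = - / c O * cauchy (shift c) i k.

Lemma expands_inv e K : gauge e -> forall f c i, c O <> 0 -> is_reciprocal c i -> expands e f c K ->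
  expands e (fun u => / f u) i K.
Proof.
  intros Hg. induction K; intros f c i Hc [Hi0 HiS] H.
  - apply expands_0_iff. apply expands_0_iff in H. rewrite Hi0. apply lim0_inv; auto.
  - pose proof (lim0_neq _ _ (expands_lim _ _ _ _ Hg H) Hc) as Hnz.
    pose proof H as Hf. apply expands_down in Hf; auto.
    apply (expands_S_iff _ _ _ _ Hg) in H. destruct H as [Hl H].
    apply (expands_S_iff _ _ _ _ Hg). rewrite Hi0. split; [apply lim0_inv; auto|].
    (* (1/f - 1/c0)/e = - (1/c0) ((f - c0)/e) (1/f) *)
    pose proof (expands_scal _ _ _ _ (- / c O)
                  (expands_mult e K Hg _ _ _ _ H (IHK _ _ _ Hc (conj Hi0 HiS) Hf))) as P.
    eapply expands_ext; [| | exact P].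
    + eapply filter_imp; [|exact (filter_and _ _ Hnz (proj2 Hg))]. intros u [Hu Hu']. cbv beta.
      unfold Rdiv. field. auto.
    + intros k _. unfold shift. rewrite HiS. auto.
Qed.

Lemma expands_mulX e f c K : gauge e -> expands e f c K -> expands e (fun u => e u * f u) (mulX c) K.
Proof.
  intros Hg H. pose proof (expands_mult e K Hg _ _ _ _ (expands_self e K Hg) H) as P.
  eapply expands_ext; [apply filter_forall; reflexivity| |exact P]. intros; apply cauchy_var_seq.
Qed.

Lemma expands_delay e f c K j : gauge e -> expands e f c K -> expands e (fun u => e u ^ j * f u) (delay j c) K.
Proof.
  intros Hg H. induction j.
  - eapply expands_ext; [apply filter_forall| |exact H]. intros; simpl; ring.
    intros k _. unfold delay. simpl. rewrite Nat.sub_0_r. auto.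
  - pose proof (expands_mulX e _ _ K Hg IHj) as P. eapply expands_ext; [apply filter_forall| |exact P].
    intros; simpl; ring. intros [|k] _; unfold delay; simpl; auto.
Qed.

(* A polynomial is its own expansion; this transfers identities between
   functions to identities between coefficient sequences. *)
Lemma expands_psum c K : expands lin_gauge (fun u => psum c u K) c K.
Proof. unfold expands. eapply lim0_ext'; [|apply lim0_const]. intros u. unfold lin_gauge. unfold Rdiv. ring. Qed.

Lemma cauchy_assoc a b c : cauchy (cauchy a b) c = cauchy a (cauchy b c).
Proof.
  apply functional_extensionality; intros k.
  pose proof (expands_mult lin_gauge k gauge_lin _ _ _ _
     (expands_mult lin_gauge k gauge_lin _ _ _ _ (expands_psum a k) (expands_psum b k)) (expands_psum c k)) as P1.
  pose proof (expands_mult lin_gauge k gauge_lin _ _ _ _ (expands_psum a k)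
     (expands_mult lin_gauge k gauge_lin _ _ _ _ (expands_psum b k) (expands_psum c k))) as P2.
  eapply (expands_unique lin_gauge k gauge_lin _ _ _ P1); [|lia].
  eapply expands_ext; [| |exact P2]. apply filter_forall; intros; ring. auto.
Qed.

Definition alt (c : nat -> R) (k : nat) : R := (-1) ^ k * c k.

Lemma lim0_opp_id : lim0 (fun u => - u) 0.
Proof. replace 0 with (-1 * 0) by ring. eapply lim0_ext'; [|apply lim0_mult; [apply lim0_const|apply lim0_id]].
  intros; simpl; ring. Qed.

Lemma expands_neg f c K : expands lin_gauge f c K -> expands lin_gauge (fun u => f (- u)) (alt c) K.
Proof.
  unfold expands. intros H.
  assert (H2 : lim0 (fun u => (-1) ^ K * ((f (- u) - psum c (lin_gauge (- u)) K) / lin_gauge (- u) ^ K)) 0).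
  { replace 0 with ((-1) ^ K * 0) by ring. apply lim0_mult. apply lim0_const.
    unfold lim0. apply (is_lim_comp (fun v => (f v - psum c (lin_gauge v) K) / lin_gauge v ^ K) (fun u => - u) 0 0 0).
    exact H. apply lim0_opp_id.
    exists (mkposreal 1 Rlt_0_1). intros y _ Hy. simpl. intro E; apply Hy. injection E. lra. }
  eapply lim0_ext; [|exact H2]. exists (mkposreal 1 Rlt_0_1). intros u _ Hu. unfold lin_gauge.
  replace (psum (alt c) u K) with (psum c (- u) K).
  2: { unfold psum. apply sumR_ext. intros i _. unfold alt. replace (- u) with (-1 * u) by ring.
       rewrite Rpow_mult_distr. ring. }
  assert (Hn : (-1) ^ K <> 0) by (apply pow_nonzero; lra).
  assert (Hu' : u ^ K <> 0) by (apply pow_nonzero; lra).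
  replace (- u) with (-1 * u) by ring. rewrite Rpow_mult_distr.
  field. auto.
Qed.

Definition spread (a : nat -> R) (k : nat) : R := if Nat.even k then a (Nat.div2 k) else 0.

Lemma spread_even a m : spread a (2 * m) = a m.
Proof. unfold spread. rewrite Nat.even_even, Nat.div2_double. auto. Qed.
Lemma spread_odd a m : spread a (S (2 * m)) = 0.
Proof. unfold spread. replace (S (2 * m)) with (2 * m + 1)%nat by lia. rewrite Nat.even_odd. auto. Qed.

Lemma psum_even c x K : (forall m, c (S (2 * m)) = 0) ->
  psum c x (2 * K) = psum (fun m => c (2 * m)%nat) (x ^ 2) K.
Proof.
  intros H. induction K.
  - unfold psum; simpl. ring.
  - replace (2 * S K)%nat with (S (S (2 * K))) by lia. unfold psum in *.
    rewrite sumR_S, sumR_S, IHK, H, (sumR_S (S K)).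
    replace (S (S (2 * K))) with (2 * S K)%nat by lia. rewrite pow_mult. ring.
Qed.

Lemma expands_even_to f c K : (forall m, c (S (2 * m)) = 0) -> expands lin_gauge f c (2 * K) ->
  expands sq_gauge f (fun m => c (2 * m)%nat) K.
Proof.
  intros H E. unfold expands in *. eapply lim0_ext'; [|exact E]. intros u. unfold lin_gauge, sq_gauge.
  rewrite psum_even by auto. rewrite pow_mult. auto.
Qed.

Lemma expands_even_of f a K : expands sq_gauge f a K -> expands lin_gauge f (spread a) (2 * K).
Proof.
  intros E. unfold expands in *. eapply lim0_ext'; [|exact E]. intros u. unfold lin_gauge, sq_gauge.
  rewrite psum_even by (apply spread_odd). rewrite pow_mult.
  rewrite (psum_ext (fun m => spread a (2 * m)%nat) a). auto. intros; apply spread_even.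
Qed.

(* Real powers of a series.  F = b^r is characterised by the ODE
   r b' F = b F' together with F_0 = b_0^r; the recursion defining P[n,r,b]
   is exactly this ODE read coefficientwise. *)

Lemma Ptab_stable r b n j : (j <= n)%nat -> Ptab r b n j = P j r b.
Proof.
  unfold P. induction n; intros H.
  - replace j with O by lia. auto.
  - simpl. destruct (Nat.leb_spec j n). apply IHn; auto.
    replace j with (S n) by lia. cbn [Ptab]. rewrite (proj2 (Nat.leb_gt (S n) n)) by lia. reflexivity.
Qed.

Lemma P_0 r b : P O r b = Rpower (b O) r.
Proof. reflexivity. Qed.

Lemma P_S n r b : P (S n) r b = / (INR (S n) * b O) *
  sumR (S n) (fun i => (INR (S i) * (1 + r) - INR (S n)) * b (S i) * P (n - i)%nat r b).
Proof.
  unfold P at 1. cbn [Ptab]. rewrite (proj2 (Nat.leb_gt (S n) n)) by lia. f_equal. unfold sum_ft.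
  replace (S (S n) - 1)%nat with (S n) by lia. apply sumR_ext. intros i Hi.
  simpl (1 + i)%nat. rewrite Ptab_stable by lia. simpl. auto.
Qed.

Definition power_ode (r : R) (b F : nat -> R) : Prop :=
  (fun n => r * cauchy (dcoef b) F n) = cauchy b (dcoef F).

Lemma power_ode_defect r b F n :
  r * cauchy (dcoef b) F n - cauchy b (dcoef F) n =
  sumR (S n) (fun i => (INR (S i) * (1 + r) - INR (S n)) * b (S i) * F (n - i)%nat)
  - INR (S n) * b O * F (S n).
Proof.
  assert (A1 : cauchy b (dcoef F) n = b O * (INR (S n) * F (S n)) +
      sumR (S n) (fun i => b (S i) * (INR (n - i) * F (n - i)%nat))).
  { unfold cauchy. rewrite sumR_first. rewrite Nat.sub_0_r. unfold dcoef at 1. f_equal.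
    rewrite sumR_S. replace (n - n)%nat with O by lia. simpl (INR 0). rewrite Rmult_0_l, Rmult_0_r, Rplus_0_r.
    apply sumR_ext. intros i Hi. unfold dcoef. replace (S (n - S i)) with (n - i)%nat by lia. auto. }
  assert (A2 : r * cauchy (dcoef b) F n = sumR (S n) (fun i => r * INR (S i) * b (S i) * F (n - i)%nat)).
  { unfold cauchy. rewrite <- sumR_scal. apply sumR_ext. intros i _. unfold dcoef. ring. }
  rewrite A1, A2.
  assert (A3 : sumR (S n) (fun i => (INR (S i) * (1 + r) - INR (S n)) * b (S i) * F (n - i)%nat)
    = sumR (S n) (fun i => r * INR (S i) * b (S i) * F (n - i)%nat)
      - sumR (S n) (fun i => b (S i) * (INR (n - i) * F (n - i)%nat))).
  { rewrite <- sumR_minus. apply sumR_ext. intros i Hi.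
    replace (INR (S n)) with (INR (S i) + INR (n - i)). ring. rewrite <- plus_INR. f_equal. lia. }
  rewrite A3. ring.
Qed.

Lemma power_ode_P r b : b O <> 0 -> power_ode r b (fun k => P k r b).
Proof.
  intros Hb. apply functional_extensionality; intros n.
  pose proof (power_ode_defect r b (fun k => P k r b) n) as E. cbv beta in E. rewrite P_S in E.
  assert (Hn : INR (S n) <> 0) by (apply not_0_INR; lia).
  apply Rminus_diag_uniq. rewrite E. field. split; auto.
Qed.

Lemma power_ode_unique r b F : b O <> 0 -> power_ode r b F -> F O = Rpower (b O) r -> forall n, F n = P n r b.
Proof.
  intros Hb HF H0.
  assert (Hrec : forall G, power_ode r b G -> forall n, INR (S n) * b O * G (S n) =
    sumR (S n) (fun i => (INR (S i) * (1 + r) - INR (S n)) * b (S i) * G (n - i)%nat)).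
  { intros G HG n. pose proof (power_ode_defect r b G n) as E. rewrite (equal_f HG n) in E. lra. }
  intros n. induction n as [n IH] using (well_founded_induction Nat.lt_wf_0).
  destruct n. rewrite H0; auto.
  assert (Hn : INR (S n) * b O <> 0) by (apply Rmult_integral_contrapositive; split; auto; apply not_0_INR; lia).
  apply (Rmult_eq_reg_l (INR (S n) * b O)); auto.
  rewrite (Hrec F HF), (Hrec _ (power_ode_P r b Hb)). apply sumR_ext. intros i Hi. rewrite IH by lia. auto.
Qed.

Lemma power_ode_mult r1 r2 b F1 F2 : power_ode r1 b F1 -> power_ode r2 b F2 -> power_ode (r1 + r2) b (cauchy F1 F2).
Proof.
  unfold power_ode. intros H1 H2.
  rewrite dcoef_cauchy, cauchy_plus_r.
  assert (E1 : cauchy b (cauchy (dcoef F1) F2) = cauchy (fun n => r1 * cauchy (dcoef b) F1 n) F2).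
  { rewrite H1. rewrite cauchy_assoc. auto. }
  assert (E2 : cauchy b (cauchy F1 (dcoef F2)) = cauchy (fun n => r2 * cauchy (dcoef b) F2 n) F1).
  { rewrite H2. rewrite (cauchy_comm F1 (dcoef F2)). rewrite cauchy_assoc. auto. }
  rewrite E1, E2, !cauchy_scal_l, !cauchy_assoc, (cauchy_comm F2 F1).
  apply functional_extensionality; intros k. ring.
Qed.

Lemma P_mult r1 r2 b : 0 < b O -> cauchy (fun k => P k r1 b) (fun k => P k r2 b) = (fun k => P k (r1 + r2) b).
Proof.
  intros Hb. apply functional_extensionality. apply power_ode_unique. lra.
  apply power_ode_mult; apply power_ode_P; lra.
  rewrite cauchy_0, !P_0. rewrite Rpower_plus. ring.
Qed.

Lemma P_zero b : 0 < b O -> (fun k => P k 0 b) = cst 1.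
Proof.
  intros Hb. symmetry. apply functional_extensionality. apply power_ode_unique. lra.
  unfold power_ode. rewrite dcoef_cst1, cauchy_cst0. apply functional_extensionality; intros n.
  destruct n; simpl; ring.
  rewrite Rpower_O; auto.
Qed.

Lemma P_one b : 0 < b O -> (fun k => P k 1 b) = b.
Proof.
  intros Hb. symmetry. apply functional_extensionality. apply power_ode_unique. lra.
  unfold power_ode. rewrite cauchy_comm. apply functional_extensionality; intros n. ring.
  rewrite Rpower_1; auto.
Qed.

Lemma P_nat b n : 0 < b O -> Nat.iter n (cauchy b) (cst 1) = (fun k => P k (INR n) b).
Proof.
  intros Hb. induction n.
  - simpl. rewrite P_zero; auto.
  - simpl Nat.iter. rewrite IHn. rewrite <- (P_one b) at 1 by auto. rewrite P_mult by auto.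
    rewrite S_INR. apply functional_extensionality; intros; f_equal; ring.
Qed.

Lemma P_reciprocal b r : 0 < b O -> is_reciprocal (fun k => P k r b) (fun k => P k (- r) b).
Proof.
  intros Hb. split.
  - rewrite !P_0. rewrite Rpower_Ropp. auto.
  - intros k. pose proof (P_mult (- r) r b Hb) as E. replace (- r + r) with 0 in E by ring.
    rewrite P_zero in E by auto. pose proof (equal_f E (S k)) as E1. simpl in E1.
    rewrite cauchy_shift in E1. rewrite P_0 in E1.
    assert (Hp : Rpower (b O) r <> 0) by (unfold Rpower; apply Rgt_not_eq, exp_pos).
    rewrite cauchy_comm. unfold shift. unfold shift in E1. field_simplify_eq; [|auto].
    rewrite P_0. lra.
Qed.

Lemma expands_P_even e f b K n : gauge e -> 0 < b O -> expands e f b K ->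
  expands e (fun u => f u ^ (2 * n)) (fun k => P k (2 * INR n) b) K.
Proof.
  intros Hg Hb H. pose proof (expands_pow e K f b (2 * n) Hg H) as P1. rewrite P_nat in P1 by auto.
  rewrite mult_INR in P1. simpl (INR 2) in P1. replace (1 + 1) with 2 in P1 by ring. exact P1.
Qed.

Lemma expands_P_odd_neg e f b K n : gauge e -> 0 < b O -> expands e f b K ->
  expands e (fun u => f u / f u ^ (2 * n)) (fun k => P k (1 - 2 * INR n) b) K.
Proof.
  intros Hg Hb H. pose proof (expands_P_even e f b K n Hg Hb H) as P1.
  assert (Hc : P O (2 * INR n) b <> 0) by (rewrite P_0; unfold Rpower; apply Rgt_not_eq, exp_pos).
  pose proof (expands_inv e K Hg _ (fun k => P k (2 * INR n) b) _ Hc (P_reciprocal b (2 * INR n) Hb) P1) as P2.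
  pose proof (expands_mult e K Hg _ _ _ _ H P2) as P3.
  rewrite <- (P_one b) in P3 at 1 by auto. rewrite P_mult in P3 by auto.
  eapply expands_ext; [apply filter_forall| |exact P3]. intros; unfold Rdiv; auto.
  intros k _. replace (1 - 2 * INR n) with (1 + - (2 * INR n)) by ring. auto.
Qed.

Definition powmix (n : nat) (a b : nat -> R) : nat -> R :=
  cauchy (fun k => P k (2 * INR n) a) (fun k => P k (1 - 2 * INR n) b).

Lemma conv_powmix n L a b : conv n L a b = powmix n a b L.
Proof. reflexivity. Qed.

Lemma powmix_0 a b : 0 < a O -> 0 < b O -> forall k, powmix 0 a b k = b k.
Proof.
  intros Ha Hb k. unfold powmix. replace (2 * INR 0) with 0 by (simpl; ring).
  replace (1 - 0) with 1 by ring. rewrite P_zero, P_one by auto. rewrite cauchy_cst1_l. auto.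
Qed.

(* A punctured limit 0 of a function vanishing at 0 is a genuine limit,
   which can be composed with any function tending to 0. *)
Lemma lim_locally_of_lim0 E : lim0 E 0 -> E 0 = 0 -> filterlim E (locally 0) (locally 0).
Proof.
  intros H H0 Q HQ. specialize (H Q HQ). destruct H as [eps Heps]. exists eps. intros y Hy.
  destruct (Req_dec y 0) as [->|Hy0]. rewrite H0. apply locally_singleton; auto. apply Heps; auto.
Qed.

Lemma compose_remainder phiX a K v l : expands sq_gauge phiX a K -> phiX 0 = a O -> lim0 v 0 ->
  lim0 (fun u => v u / u) l ->
  lim0 (fun u => (phiX (v u) - psum a (v u ^ 2) K) / (u ^ 2) ^ K) 0.
Proof.
  intros H H0 Hv Hl.
  set (E := fun w => (phiX w - psum a (sq_gauge w) K) / sq_gauge w ^ K).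
  assert (HE : filterlim E (locally 0) (locally 0)).
  { apply lim_locally_of_lim0. exact H. unfold E, sq_gauge. replace (0 ^ 2) with 0 by (simpl; ring).
    rewrite psum_at0, H0. unfold Rdiv; ring. }
  assert (HEv : lim0 (fun u => E (v u)) 0).
  { unfold lim0, is_lim. eapply filterlim_comp. exact Hv. exact HE. }
  assert (HL := lim0_mult _ _ _ _ HEv (lim0_pow _ _ K (lim0_pow _ _ 2 Hl))). rewrite Rmult_0_l in HL.
  eapply lim0_ext; [|exact HL].
  exists (mkposreal 1 Rlt_0_1). intros u _ Hu. unfold E, sq_gauge.
  destruct (Req_dec (v u) 0) as [Hz|Hz].
  - rewrite Hz. replace (0 ^ 2) with 0 by (simpl; ring). rewrite psum_at0, H0. unfold Rdiv. ring.
  - rewrite <- !pow_mult. unfold Rdiv. rewrite Rpow_mult_distr, pow_inv. field. split; apply pow_nonzero; auto.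
Qed.

(* The polynomial part: B * sum_(n<=Kx) aX_n (u A / B)^(2n). The gauge e is
   u or u^2, and e^(j n) = u^(2n) says where u^(2n) sits in the gauge. *)
Lemma expands_poly_part e (j : nat -> nat) L Kx aX A B a b :
  gauge e -> (forall u n, e u ^ j n = u ^ (2 * n)) ->
  expands e A a L -> expands e B b L -> 0 < a O -> 0 < b O ->
  expands e (fun u => B u * psum aX ((u * A u / B u) ^ 2) Kx)
     (fun k => sumR (S Kx) (fun n => aX n * delay (j n) (powmix n a b) k)) L.
Proof.
  intros Hg Hj HA HB Ha Hb.
  assert (HBnz := lim0_neq _ _ (expands_lim _ _ _ _ Hg HB) ltac:(lra)).
  assert (Hsum : expands e (fun u => sumR (S Kx) (fun n => aX n * (e u ^ j n * (A u ^ (2 * n) * (B u / B u ^ (2 * n))))))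
     (fun k => sumR (S Kx) (fun n => aX n * delay (j n) (powmix n a b) k)) L).
  { apply expands_sumR. intros n _. apply expands_scal. apply expands_delay; auto.
    apply (expands_mult e L Hg _ _ _ _ (expands_P_even e A a L n Hg Ha HA) (expands_P_odd_neg e B b L n Hg Hb HB)). }
  eapply expands_ext; [| |exact Hsum]; [|auto].
  eapply filter_imp; [|exact HBnz]. intros u HBu. cbv beta.
  unfold psum. rewrite <- sumR_scal. apply sumR_ext. intros n _. rewrite Hj, <- pow_mult.
  unfold Rdiv. rewrite !Rpow_mult_distr, pow_inv. field. apply pow_nonzero; auto.
Qed.

Lemma expansion_compose e (j : nat -> nat) L Kx phiX aX A B a b :
  gauge e -> (forall u n, e u ^ j n = u ^ (2 * n)) ->
  (forall r, lim0 (fun u => r u / (u ^ 2) ^ Kx) 0 -> lim0 (fun u => r u / e u ^ L) 0) ->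
  expands sq_gauge phiX aX Kx -> phiX 0 = aX O -> expands e A a L -> expands e B b L -> 0 < a O -> 0 < b O ->
  expands e (fun u => B u * phiX (u * A u / B u))
     (fun k => sumR (S Kx) (fun n => aX n * delay (j n) (powmix n a b) k)) L.
Proof.
  intros Hg Hj Hrem Hphi H0 HA HB Ha Hb.
  pose proof (expands_lim _ _ _ _ Hg HA) as LA. pose proof (expands_lim _ _ _ _ Hg HB) as LB.
  assert (HBnz := lim0_neq _ _ LB ltac:(lra)).
  assert (Lq : lim0 (fun u => A u / B u) (a O / b O)).
  { unfold Rdiv. apply lim0_mult; auto. apply lim0_inv; auto; lra. }
  set (v := fun u => u * A u / B u).
  assert (Lvu : lim0 (fun u => v u / u) (a O / b O)).
  { eapply lim0_ext; [|exact Lq]. apply near_punctured. intros u _ Hu. unfold v, Rdiv.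
    replace (u * A u * / B u * / u) with (A u * / B u * (u * / u)) by ring. rewrite Rinv_r; auto; ring. }
  assert (Lv : lim0 v 0).
  { replace 0 with (0 * (a O / b O)) by ring. eapply lim0_ext'; [|apply lim0_mult; [apply lim0_id|exact Lq]].
    intros u; unfold v, Rdiv; ring. }
  assert (Rem := Hrem _ (compose_remainder phiX aX Kx v _ Hphi H0 Lv Lvu)).
  assert (Rem2 := lim0_mult _ _ _ _ LB Rem). rewrite Rmult_0_r in Rem2.
  pose proof (expands_add_rem _ _ (fun u => B u * (phiX (v u) - psum aX (v u ^ 2) Kx)) _ _
                (expands_poly_part e j L Kx aX A B a b Hg Hj HA HB Ha Hb)) as Fin.
  eapply expands_ext; [| |apply Fin].
  - apply filter_forall. intros u. cbv beta. fold (v u). ring.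
  - auto.
  - eapply lim0_ext'; [|exact Rem2]. intros u. cbv beta. unfold Rdiv. ring.
Qed.

Definition phi (X : R -> R -> R) (u : R) : R := X (1 - u) (1 + u).

Lemma mean_pos X s t : is_mean X -> 0 < s -> 0 < t -> 0 < X s t.
Proof. intros H Hs Ht. destruct (H s t Hs Ht) as [A _]. eapply Rlt_le_trans; [|exact A].
  unfold Rmin; destruct Rle_dec; auto. Qed.

Lemma phi_pos X u : is_mean X -> -1 < u < 1 -> 0 < phi X u.
Proof. intros H Hu. unfold phi. apply mean_pos; auto; lra. Qed.

Lemma phi_0 X : is_mean X -> phi X 0 = 1.
Proof.
  intros H. unfold phi. replace (1 - 0) with 1 by ring. replace (1 + 0) with 1 by ring.
  destruct (H 1 1 Rlt_0_1 Rlt_0_1) as [A B].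
  rewrite Rmin_left in A by lra. rewrite Rmax_left in B by lra. lra.
Qed.

(* phi X is squeezed between 1 - |u| and 1 + |u|. *)
Lemma phi_lim X : is_mean X -> lim0 (phi X) 1.
Proof.
  intros H. unfold lim0. apply is_lim_spec. intros eps.
  assert (Hd : 0 < Rmin eps 1) by (apply Rmin_glb_lt; [apply cond_pos|lra]).
  exists (mkposreal _ Hd). intros u Hu _. change (Rabs (u + - 0) < Rmin eps 1) in Hu.
  rewrite Ropp_0, Rplus_0_r in Hu. simpl.
  assert (He : Rmin eps 1 <= eps) by apply Rmin_l. assert (H1 : Rmin eps 1 <= 1) by apply Rmin_r.
  apply Rabs_def2 in Hu. destruct Hu as [Hu1 Hu2].
  destruct (H (1 - u) (1 + u) ltac:(lra) ltac:(lra)) as [A B].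
  unfold phi. destruct (Rle_dec (1 - u) (1 + u)).
  - rewrite Rmin_left in A by lra. rewrite Rmax_right in B by lra. apply Rabs_def1; lra.
  - rewrite Rmin_right in A by lra. rewrite Rmax_left in B by lra. apply Rabs_def1; lra.
Qed.

Lemma homogeneous_phi X p q : is_homogeneous X -> 0 < p -> 0 < q ->
  X p q = (p + q) / 2 * phi X ((q - p) / (p + q)).
Proof.
  intros Hh Hp Hq. unfold phi.
  replace (1 - (q - p) / (p + q)) with (p / ((p + q) / 2)) by (field; lra).
  replace (1 + (q - p) / (p + q)) with (q / ((p + q) / 2)) by (field; lra).
  rewrite <- Hh; [f_equal; field; lra| | |]; try lra;
  apply Rdiv_lt_0_compat; lra.
Qed.

(* Homogeneity turns the remainder at infinity, for x = 1/|u| and t = sign u,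
   into the remainder of phi X at u. *)
Lemma asymp_rescale X a K x t u : is_homogeneous X -> 0 < x -> t = u * x -> t * t = 1 -> -1 < u < 1 ->
  (X (x - t) (x + t) - sum_ft 0 K (fun n => a n * t ^ (2 * n) * x / x ^ (2 * n))) * x ^ (2 * K) / x
  = (phi X u - psum a (sq_gauge u) K) / sq_gauge u ^ K.
Proof.
  intros Hh Hx Ht Htt Hu. subst t.
  assert (Hu0 : u <> 0) by (intro; subst; lra).
  replace (x - u * x) with (x * (1 - u)) by ring. replace (x + u * x) with (x * (1 + u)) by ring.
  rewrite Hh by lra.
  assert (Hs : sum_ft 0 K (fun n => a n * (u * x) ^ (2 * n) * x / x ^ (2 * n)) = x * psum a (sq_gauge u) K).
  { unfold sum_ft, psum. replace (S K - 0)%nat with (S K) by lia. rewrite <- sumR_scal.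
    apply sumR_ext. intros i _. simpl (0 + i)%nat. unfold sq_gauge. rewrite <- pow_mult, Rpow_mult_distr.
    field. apply pow_nonzero; lra. }
  rewrite Hs. unfold phi, sq_gauge.
  assert (H1 : (u ^ 2) ^ K * x ^ (2 * K) = 1).
  { rewrite <- pow_mult, <- Rpow_mult_distr, pow_mult. replace ((u * x) ^ 2) with 1 by (simpl; lra). apply pow1. }
  assert (Hu2 : (u ^ 2) ^ K <> 0) by (apply pow_nonzero, pow_nonzero; auto).
  assert (Hxk : x ^ (2 * K) = / (u ^ 2) ^ K).
  { apply (Rmult_eq_reg_l ((u ^ 2) ^ K)); auto. rewrite H1. field. auto. }
  rewrite Hxk. field. split; auto; lra.
Qed.

Lemma asymp_expansion X a K : is_homogeneous X -> has_sym_asymp_exp X a -> expands sq_gauge (phi X) a K.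
Proof.
  intros Hh Ha. unfold expands, lim0. apply is_lim_spec. intros eps.
  pose proof (proj2 (is_lim_spec _ _ _) (Ha 1 K) eps) as [M1 HM1].
  pose proof (proj2 (is_lim_spec _ _ _) (Ha (-1) K) eps) as [M2 HM2].
  set (B := Rmax 1 (Rmax M1 M2)).
  assert (HB1 : 1 <= B) by apply Rmax_l.
  assert (HBM1 : M1 <= B) by (eapply Rle_trans; [apply Rmax_l|apply Rmax_r]).
  assert (HBM2 : M2 <= B) by (eapply Rle_trans; [apply Rmax_r|apply Rmax_r]).
  assert (HBp : 0 < / B) by (apply Rinv_0_lt_compat; lra).
  exists (mkposreal _ HBp). intros u Hu Hu0. change (Rabs (u + - 0) < / B) in Hu.
  rewrite Ropp_0, Rplus_0_r in Hu. simpl.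
  assert (HiB : / B <= 1) by (rewrite <- Rinv_1; apply Rinv_le_contravar; lra).
  destruct (Rlt_or_le 0 u) as [Hp|Hn].
  - rewrite Rabs_pos_eq in Hu by lra.
    assert (Hx : B < / u).
    { rewrite <- (Rinv_inv B). apply Rinv_lt_contravar; auto. apply Rmult_lt_0_compat; lra. }
    specialize (HM1 (/ u) ltac:(lra)). cbv beta in HM1.
    rewrite (asymp_rescale X a K (/ u) 1 u) in HM1; auto.
    apply Rinv_0_lt_compat; lra. field; lra. ring. lra.
  - assert (Hn' : u < 0) by (destruct Hn; auto; exfalso; apply Hu0; auto).
    rewrite Rabs_left in Hu by lra.
    assert (Hx : B < / (- u)).
    { rewrite <- (Rinv_inv B). apply Rinv_lt_contravar; [apply Rmult_lt_0_compat|]; lra. }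
    specialize (HM2 (/ (- u)) ltac:(lra)). cbv beta in HM2.
    rewrite (asymp_rescale X a K (/ (- u)) (-1) u) in HM2; auto.
    all: try (apply Rinv_0_lt_compat; lra). field; lra. ring. lra.
Qed.

Lemma asymp_coef_0 X a : is_mean X -> is_homogeneous X -> has_sym_asymp_exp X a -> a O = 1.
Proof.
  intros Hm Hh Ha. pose proof (asymp_expansion X a 0 Hh Ha) as E. apply expands_0_iff in E.
  eapply lim0_unique; [exact E|apply phi_lim; auto].
Qed.

Lemma asymp_expansion_lin X a L : is_homogeneous X -> has_sym_asymp_exp X a ->
  expands lin_gauge (phi X) (spread a) L.
Proof.
  intros Hh Ha. apply (expands_down_le lin_gauge _ _ (2 * L)); [apply gauge_lin|lia|].
  apply expands_even_of. apply asymp_expansion; auto.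
Qed.

Lemma gseq_expansion X a L : is_homogeneous X -> has_sym_asymp_exp X a -> a O = 1 ->
  expands lin_gauge (fun u => (phi X u - 1 + u) / u) (gseq a) L.
Proof.
  intros Hh Ha H0.
  pose proof (expands_plus _ _ _ _ _ _ (expands_plus _ _ _ _ _ _ (asymp_expansion_lin X a (S L) Hh Ha)
     (expands_const lin_gauge (-1) (S L))) (expands_self lin_gauge (S L) gauge_lin)) as P1.
  apply (expands_S_iff _ _ _ _ gauge_lin) in P1. destruct P1 as [_ P1].
  eapply expands_ext; [| |exact P1].
  - apply filter_forall. intros u. cbv beta. unfold lin_gauge. simpl (cst _ _). simpl (var_seq _).
    unfold spread at 1. simpl (Nat.even 0). simpl (Nat.div2 0). rewrite H0. unfold Rdiv. ring.
  - intros [|k] _; unfold shift.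
    + simpl. unfold spread. simpl. ring.
    + unfold spread, gseq. simpl (cst _ _). simpl (var_seq _). rewrite Nat.odd_succ, Nat.even_succ_succ.
      destruct (Nat.even k); simpl; ring.
Qed.

Lemma hseq_expansion X a L : is_homogeneous X -> has_sym_asymp_exp X a -> a O = 1 ->
  expands lin_gauge (fun u => 1 - u + phi X u) (hseq a) L.
Proof.
  intros Hh Ha H0.
  pose proof (expands_plus _ _ _ _ _ _ (expands_plus _ _ _ _ _ _ (expands_const lin_gauge 1 L)
     (expands_scal _ _ _ _ (-1) (expands_self lin_gauge L gauge_lin))) (asymp_expansion_lin X a L Hh Ha)) as P1.
  eapply expands_ext; [| |exact P1].
  - apply filter_forall. intros u. cbv beta. unfold lin_gauge. ring.
  - intros [|[|k]] _.
    + simpl. unfold spread. simpl. rewrite H0. ring.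
    + simpl. unfold spread. simpl. ring.
    + unfold spread, hseq. simpl (cst _ _). simpl (var_seq _). ring.
Qed.

Lemma rem_lin_of_sq L : forall r, lim0 (fun u => r u / (u ^ 2) ^ L) 0 -> lim0 (fun u => r u / lin_gauge u ^ L) 0.
Proof.
  intros r H. assert (H2 := lim0_mult _ _ _ _ H (lim0_pow _ _ L lim0_id)). rewrite Rmult_0_l in H2.
  eapply lim0_ext; [|exact H2]. apply near_punctured. intros u _ Hu. unfold lin_gauge.
  rewrite <- pow_mult. replace (2 * L)%nat with (L + L)%nat by lia. rewrite pow_add.
  field. apply pow_nonzero; auto.
Qed.

Lemma hseq_even a m : hseq a (2 * S m) = a (S m).
Proof.
  replace (2 * S m)%nat with (S (S (2 * m))) by lia. unfold hseq.
  rewrite Nat.even_succ_succ, Nat.even_even.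
  change (Nat.div2 (S (S (2 * m)))) with (S (Nat.div2 (2 * m))). rewrite Nat.div2_double. auto.
Qed.

Lemma sseq_0 aM aN : aN O = 1 -> sseq aM aN O = 1.
Proof.
  intros H. unfold sseq, sum_ft. change (sumR (S 0 - 0) ?f) with (0 + f O).
  cbv beta. change (0 + 0)%nat with O. change (2 * 0 - 2 * 0)%nat with O.
  rewrite conv_powmix, powmix_0 by (simpl; lra). rewrite H. simpl. field.
Qed.

Lemma dseq_0 aM aN : aN O = 1 -> dseq aM aN O = / 2.
Proof.
  intros H. unfold dseq, sum_ft. change (sumR (S 0 - 0) ?f) with (0 + f O).
  cbv beta. change (0 + 0)%nat with O. change (2 * 0 + 1 - 2 * 0)%nat with 1%nat.
  rewrite conv_powmix, powmix_0 by (simpl; lra). rewrite H. simpl. field.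
Qed.

Lemma conv_0 n a b : conv n 0 a b = Rpower (a O) (2 * INR n) * Rpower (b O) (1 - 2 * INR n).
Proof. unfold conv, sum_ft. simpl. rewrite !P_0. ring. Qed.

Lemma Rpower_base1 x : Rpower 1 x = 1.
Proof. unfold Rpower. rewrite ln_1, Rmult_0_r. apply exp_0. Qed.

Section Stabilized.

Variables M N K : R -> R -> R.
Variables aM aN aK : nat -> R.
Hypothesis HmM : is_mean M.
Hypothesis HsM : is_symmetric M.
Hypothesis HhM : is_homogeneous M.
Hypothesis HaM : has_sym_asymp_exp M aM.
Hypothesis HmN : is_mean N.
Hypothesis HsN : is_symmetric N.
Hypothesis HhN : is_homogeneous N.
Hypothesis HaN : has_sym_asymp_exp N aN.
Hypothesis HmK : is_mean K.
Hypothesis HhK : is_homogeneous K.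
Hypothesis HaK : has_sym_asymp_exp K aK.
Hypothesis Hstab : is_stabilized K N M.

Lemma aM_0 : aM O = 1. Proof. exact (asymp_coef_0 M aM HmM HhM HaM). Qed.
Lemma aN_0 : aN O = 1. Proof. exact (asymp_coef_0 N aN HmN HhN HaN). Qed.
Lemma aK_0 : aK O = 1. Proof. exact (asymp_coef_0 K aK HmK HhK HaK). Qed.

Definition N1 (u : R) : R := N (1 - u) (phi M u).
Definition N2 (u : R) : R := N (phi M u) (1 + u).
Definition Spart (u : R) : R := (N1 u + N2 u) / 2.
Definition Dpart (u : R) : R := (N2 u - N1 u) / 2.

Definition N1coef (L k : nat) : R :=
  / 2 * sumR (S L) (fun n => aN n * delay (2 * n) (powmix n (gseq aM) (hseq aM)) k).

(* N1 = (1/2) h * phi N (u g / h) with g, h the series g^M, h^M. *)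
Lemma N1_expansion L : expands lin_gauge N1 (N1coef L) L.
Proof.
  pose proof (expansion_compose lin_gauge (fun n => (2 * n)%nat) L L (phi N) aN
     (fun u => (phi M u - 1 + u) / u) (fun u => 1 - u + phi M u) (gseq aM) (hseq aM) gauge_lin
     (fun u n => eq_refl) (rem_lin_of_sq L) (asymp_expansion N aN L HhN HaN)
     ltac:(rewrite phi_0, aN_0; auto) (gseq_expansion M aM L HhM HaM aM_0) (hseq_expansion M aM L HhM HaM aM_0)
     ltac:(simpl; lra) ltac:(simpl; lra)) as P.
  apply (expands_scal _ _ _ _ (/ 2)) in P.
  eapply expands_ext; [| |exact P]; [|intros; reflexivity].
  apply near_punctured. intros u Hu Hu0. cbv beta. unfold N1.
  assert (Hm := phi_pos M u HmM Hu).
  rewrite (homogeneous_phi N) by (auto; lra).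
  replace (u * ((phi M u - 1 + u) / u) / (1 - u + phi M u)) with ((phi M u - (1 - u)) / (1 - u + phi M u))
    by (field; lra).
  field.
Qed.

(* By symmetry N2 u = N1 (-u). *)
Lemma N2_expansion L : expands lin_gauge N2 (alt (N1coef L)) L.
Proof.
  eapply expands_ext; [|intros; reflexivity|apply expands_neg, N1_expansion].
  apply near_punctured. intros u Hu _. unfold N1, N2. cbv beta.
  assert (E : phi M (- u) = phi M u).
  { unfold phi. replace (1 - - u) with (1 + u) by ring. replace (1 + - u) with (1 - u) by ring.
    apply HsM; lra. }
  rewrite E. replace (1 - - u) with (1 + u) by ring. apply HsN. lra. apply phi_pos; auto.
Qed.

Lemma N1coef_even L m : (2 * m <= L)%nat -> N1coef L (2 * m) = sseq aM aN m.
Proof.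
  intros H. unfold N1coef, sseq, sum_ft. f_equal.
  rewrite (sum_delay_trunc aN (fun n => powmix n (gseq aM) (hseq aM)) (fun n => 2 * n)%nat L (2 * m) m); try lia.
  replace (S m - 0)%nat with (S m) by lia. apply sumR_ext. intros. reflexivity.
  all: intros; lia.
Qed.

Lemma N1coef_odd L m : (S (2 * m) <= L)%nat -> N1coef L (S (2 * m)) = - dseq aM aN m.
Proof.
  intros H. unfold N1coef, dseq, sum_ft.
  rewrite (sum_delay_trunc aN (fun n => powmix n (gseq aM) (hseq aM)) (fun n => 2 * n)%nat L (S (2 * m)) m); try lia.
  replace (S m - 0)%nat with (S m) by lia. rewrite Ropp_mult_distr_l, Ropp_involutive. f_equal.
  apply sumR_ext. intros n Hn. simpl (0 + n)%nat. rewrite conv_powmix. f_equal. f_equal. lia.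
  all: intros; lia.
Qed.

Lemma Spart_expansion Kx : expands sq_gauge Spart (sseq aM aN) Kx.
Proof.
  set (L := (2 * Kx)%nat).
  pose proof (expands_scal _ _ _ _ (/ 2) (expands_plus _ _ _ _ _ _ (N1_expansion L) (N2_expansion L))) as P.
  apply expands_even_to in P.
  - eapply expands_ext; [| |exact P].
    + apply filter_forall. intros u. unfold Spart. cbv beta. unfold Rdiv. ring.
    + intros m Hm. cbv beta. unfold alt. rewrite pow_1_even, N1coef_even by (unfold L; lia). field.
  - intros m. unfold alt. rewrite pow_1_odd. ring.
Qed.

Lemma Dpart_expansion Kx : expands sq_gauge (fun u => Dpart u / u) (dseq aM aN) Kx.
Proof.
  set (L := S (2 * Kx)).
  pose proof (expands_scal _ _ _ _ (/ 2) (expands_plus _ _ _ _ _ _ (N2_expansion L)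
                (expands_scal _ _ _ _ (-1) (N1_expansion L)))) as P.
  apply (expands_S_iff _ _ _ _ gauge_lin) in P. destruct P as [_ P].
  apply expands_even_to in P.
  - eapply expands_ext; [| |exact P].
    + apply filter_forall. intros u. unfold Dpart, lin_gauge, alt. cbv beta. simpl pow. unfold Rdiv. ring.
    + intros m Hm. cbv beta. unfold shift, alt. rewrite pow_1_odd, N1coef_odd by (unfold L; lia). field.
  - intros m. unfold shift, alt. replace (S (S (2 * m))) with (2 * S m)%nat by lia. rewrite pow_1_even. ring.
Qed.

Lemma stabilized_profile u : -1 < u < 1 -> u <> 0 ->
  phi M u = Spart u * phi K (u * (Dpart u / u) / Spart u).
Proof.
  intros Hu Hu0.
  assert (Hm := phi_pos M u HmM Hu).
  assert (H1 : 0 < N1 u) by (apply mean_pos; auto; lra).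
  assert (H2 : 0 < N2 u) by (apply mean_pos; auto; lra).
  unfold phi at 1. rewrite Hstab by lra. fold (phi M u). fold (N1 u) (N2 u).
  rewrite (homogeneous_phi K) by auto. unfold Spart, Dpart. f_equal. f_equal. field. lra.
Qed.

Lemma aM_recursion m :
  aM m = sumR (S m) (fun n => aK n * powmix n (dseq aM aN) (sseq aM aN) (m - n)%nat).
Proof.
  assert (Hd0 : 0 < dseq aM aN O) by (rewrite dseq_0 by exact aN_0; lra).
  assert (Hs0 : 0 < sseq aM aN O) by (rewrite sseq_0 by exact aN_0; lra).
  pose proof (expansion_compose sq_gauge (fun n => n) m m (phi K) aK (fun u => Dpart u / u) Spart
     (dseq aM aN) (sseq aM aN) gauge_sq (fun u n => eq_sym (pow_mult u 2 n)) (fun r H => H)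
     (asymp_expansion K aK m HhK HaK) ltac:(rewrite phi_0, aK_0; auto)
     (Dpart_expansion m) (Spart_expansion m) Hd0 Hs0) as P.
  assert (PM : expands sq_gauge (phi M) (fun k => sumR (S m) (fun n => aK n *
                 delay n (powmix n (dseq aM aN) (sseq aM aN)) k)) m).
  { eapply expands_ext; [|intros; reflexivity|exact P].
    apply near_punctured. intros u Hu Hu0. symmetry. apply stabilized_profile; auto. }
  rewrite (expands_unique sq_gauge m gauge_sq _ _ _ (asymp_expansion M aM m HhM HaM) PM m (le_n m)).
  apply (sum_delay_trunc aK (fun n => powmix n (dseq aM aN) (sseq aM aN)) (fun n => n) m m m); intros; lia.
Qed.

Lemma sseq_split m : (1 <= m)%nat ->
  sseq aM aN m = / 2 * (aM m + sum_ft 1 m (fun n => aN n * conv n (2 * m - 2 * n) (gseq aM) (hseq aM))).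
Proof.
  intros Hm. destruct m as [|m']; [lia|].
  unfold sseq. unfold sum_ft at 1. replace (S (S m') - 0)%nat with (S (S m')) by lia. rewrite sumR_first.
  simpl (0 + 0)%nat. rewrite aN_0, conv_powmix, powmix_0 by (simpl; lra). rewrite Nat.sub_0_r, hseq_even.
  f_equal. f_equal. ring.
Qed.

Lemma aM_formula m : (1 <= m)%nat ->
  aM m = sum_ft 1 m (fun n => aN n * conv n (2 * m - 2 * n) (gseq aM) (hseq aM))
       + 2 * sum_ft 1 m (fun n => aK n * conv n (m - n) (dseq aM aN) (sseq aM aN)).
Proof.
  intros Hm. pose proof (aM_recursion m) as E.
  destruct m as [|m']; [lia|].
  rewrite sumR_first, aK_0, Nat.sub_0_r, powmix_0 in E
    by (rewrite ?dseq_0, ?sseq_0 by exact aN_0; lra).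
  rewrite sseq_split in E by exact Hm.
  change (sumR (S m') (fun i => aK (S i) * powmix (S i) (dseq aM aN) (sseq aM aN) (S m' - S i)%nat))
    with (sum_ft 1 (S m') (fun n => aK n * conv n (S m' - n) (dseq aM aN) (sseq aM aN))) in E.
  lra.
Qed.

Lemma aM_1 : aM 1%nat = / 2 * (aK 1%nat + aN 1%nat).
Proof.
  rewrite (aM_formula 1 (le_n 1)). unfold sum_ft. simpl sumR.
  simpl (2 * 1 - 2 * (1 + 0))%nat. simpl (1 - (1 + 0))%nat.
  rewrite !conv_0, dseq_0, sseq_0 by exact aN_0. simpl (gseq aM 0). simpl (hseq aM 0).
  rewrite !Rpower_base1.
  replace (1 - 2 * INR 1) with (- (1)) by (simpl; ring).
  replace (2 * INR 1) with (INR 2) by (simpl; ring).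
  rewrite Rpower_Ropp, Rpower_1, Rpower_pow by lra. simpl. field.
Qed.

End Stabilized.

Theorem theorem3p6 (M N K : R -> R -> R) (aM aN aK : nat -> R) :
  is_mean M -> is_symmetric M -> is_homogeneous M ->
  is_mean N -> is_symmetric N -> is_homogeneous N ->
  is_mean K -> is_symmetric K -> is_homogeneous K ->
  has_sym_asymp_exp M aM -> has_sym_asymp_exp N aN -> has_sym_asymp_exp K aK ->
  is_stable K -> is_stable N -> is_stabilized K N M ->
  aM 0%nat = 1 /\
  (forall m : nat, (1 <= m)%nat ->
     aM m =
       sum_ft 1 m (fun n => aN n * conv n (2 * m - 2 * n) (gseq aM) (hseq aM))
     + 2 * sum_ft 1 m (fun n => aK n *
             conv n (m - n) (dseq aM aN) (sseq aM aN))) /\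
  aM 1%nat = / 2 * (aK 1%nat + aN 1%nat).
Proof.
  intros HmM HsM HhM HmN HsN HhN HmK _ HhK HaM HaN HaK _ _ Hstab.
  split; [exact (aM_0 M aM HmM HhM HaM)|].
  split.
  - exact (aM_formula M N K aM aN aK HmM HsM HhM HaM HmN HsN HhN HaN HmK HhK HaK Hstab).
  - exact (aM_1 M N K aM aN aK HmM HsM HhM HaM HmN HsN HhN HaN HmK HhK HaK Hstab).
Qed.
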